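(* Fix $t>0$ and $D\ge1$. The following are equivalent: (a) for all finite $X,Y,Z\subset\mathbb{R}^D$, $d^t_{Mag}(X,Y)+d^t_{Mag}(Y,Z)\ge d^t_{Mag}(X,Z)$; (b) magnitude at scale $t$ is submodular on finite subsets of $\mathbb{R}^D$, i.e. $\mathrm{Mag}(tA)+\mathrm{Mag}(tB)\ge\mathrm{Mag}(t(A\cup B))+\mathrm{Mag}(t(A\cap B))$ for all finite $A,B\subset\mathbb{R}^D$. Moreover, the magnitude distance does not satisfy the triangle inequality in general: there exist $D$, $t>0$ and finite $X,Y,Z\subset\mathbb{R}^D$ with $d^t_{Mag}(X,Y)+d^t_{Mag}(Y,Z)<d^t_{Mag}(X,Z)$.
   Context: For a finite set $A\subset\mathbb{R}^D$ and $t>0$, the matrix $\zeta_{tA}(x,y)=\exp(-t\|x-y\|)$ ($x,y\in A$) is invertible and $\mathrm{Mag}(tA)=\mathbb{1}^\top\zeta_{tA}^{-1}\mathbb{1}$, with $\mathrm{Mag}(t\emptyset)=0$. The magnitude distance is $d^t_{Mag}(X,Y)=2\,\mathrm{Mag}(t(X\cup Y))-\mathrm{Mag}(tX)-\mathrm{Mag}(tY)$. *)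

From HB Require Import structures.
From mathcomp Require Import all_boot all_order all_algebra.
From mathcomp Require Import finmap.
From mathcomp Require Import all_classical all_reals all_analysis.
Set Implicit Arguments. Unset Strict Implicit. Unset Printing Implicit Defensive.
Import Order.TTheory GRing.Theory Num.Theory.
Local Open Scope ring_scope.

Definition edist (R : realType) (D : nat) (x y : 'rV[R]_D) : R :=
  Num.sqrt (\sum_(i < D) (x 0 i - y 0 i) ^+ 2).

Definition zeta_mx (R : realType) (D : nat) (t : R) (A : {fset 'rV[R]_D}) :
  'M[R]_(size (enum_fset A)) :=
  \matrix_(i, j) expR (- (t * edist (nth 0 (enum_fset A) i) (nth 0 (enum_fset A) j))).

(* Mag(tA) = 1^T zeta_{tA}^{-1} 1 ; equals 0 for A empty (empty sum) *)
Definition Mag (R : realType) (D : nat) (t : R) (A : {fset 'rV[R]_D}) : R :=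
  \sum_i \sum_j (invmx (zeta_mx t A)) i j.

Definition dMag (R : realType) (D : nat) (t : R) (X Y : {fset 'rV[R]_D}) : R :=
  2 * Mag t (X `|` Y)%fset - Mag t X - Mag t Y.

(* On the line, Mag has an explicit weighting, built by inserting one point at a time:
   inserting p into A increases Mag by phi a + phi b - phi (a b), where a and b are the
   similarities of p to its nearest neighbours in A on either side (0 if there is none)
   and phi q = (1 - q) / (1 + q).  This increment decreases in a and b, which only grow
   with A, so magnitude on the line is monotone with diminishing returns; hence it is
   submodular, and monotonicity plus submodularity give the triangle inequality for
   d_Mag.  In the plane, at the scale where similarities are powers of 1/2, the 3-4-5
   triangles {(0,0), (0,4), (3,4)} and {(0,8), (0,4), (3,4)} violate submodularity.
   Since d(A, A & B) + d(A & B, B) - d(A, B) is twice the submodularity defect of A and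
   B, the triangle inequality implies submodularity in every dimension, and the planar
   pair violates the triangle inequality. *)

From Pilot Require Import Defs.
From HB Require Import structures.
From mathcomp Require Import all_boot all_order all_algebra.
From mathcomp Require Import finmap.
From mathcomp Require Import all_classical all_reals all_analysis.
From mathcomp Require Import ring lra.
Import Order.TTheory GRing.Theory Num.Theory.
Local Open Scope fset_scope.
Local Open Scope ring_scope.
Set Implicit Arguments. Unset Strict Implicit. Unset Printing Implicit Defensive.

Lemma exists_fset_argmax d (T : orderType d) (K : choiceType) (A : {fset K})
    (P : pred K) (F : K -> T) :
  (exists2 x, x \in A & P x) ->
  exists m, [/\ m \in A, P m & forall y, y \in A -> P y -> (F y <= F m)%O].
Proof.
case=> x xA Px.
have [m Pm mmax] := @arg_maxP _ _ _ (FSetSub xA : A) (fun i => P (val i)) (F \o val) Px.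
exists (val m); split=> // [|y yA Py]; first exact: fsvalP.
exact: (mmax (FSetSub yA)).
Qed.

Lemma big_fset_indicator (R : pzSemiRingType) (K : choiceType) (A : {fset K}) (z : K)
    (F : K -> R) :
  \sum_(y <- A) F y * (y == z)%:R = (z \in A)%:R * F z.
Proof.
have [zA|zA] := boolP (z \in A); last first.
  rewrite mul0r big1_seq // => y /andP[_ yA].
  by rewrite (_ : (y == z) = false) ?mulr0 //; apply: contraNF zA => /eqP <-.
rewrite (big_fsetD1 z) //= eqxx mulr1 mul1r big1_seq ?addr0 // => y /andP[_].
by rewrite in_fsetD1 => /andP[/negbTE -> _]; rewrite mulr0.
Qed.

Section Similarity.
Variables (R : realType) (D : nat) (t : R).
Local Notation pt := 'rV[R]_D.

Definition sim (x y : pt) : R := expR (- (t * Defs.edist x y)).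

Lemma edistC (x y : pt) : Defs.edist x y = Defs.edist y x.
Proof. by rewrite /Defs.edist; congr Num.sqrt; apply: eq_bigr => i _; rewrite -sqrrN opprB. Qed.

Lemma simC (x y : pt) : sim x y = sim y x.
Proof. by rewrite /sim edistC. Qed.

Lemma sim_refl (x : pt) : sim x x = 1.
Proof.
rewrite /sim /Defs.edist big1 => [|i _]; last by rewrite subrr expr0n.
by rewrite sqrtr0 mulr0 oppr0 expR0.
Qed.

Lemma sim_gt0 (x y : pt) : 0 < sim x y.
Proof. exact: expR_gt0. Qed.

Lemma sim_le1 (x y : pt) : 0 <= t -> sim x y <= 1.
Proof. by move=> t0; rewrite expR_le1 oppr_le0 mulr_ge0 ?sqrtr_ge0. Qed.

Definition weighting (s : seq pt) (w : pt -> R) :=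
  forall x, x \in s -> \sum_(y <- s) sim x y * w y = 1.

Definition sim_nondegenerate (s : seq pt) :=
  forall v : pt -> R, (forall x, x \in s -> \sum_(y <- s) sim x y * v y = 0) ->
  forall y, y \in s -> v y = 0.

Section Enumeration.
Variable A : {fset pt}.
Local Notation n := (size (enum_fset A)).
Local Notation a_ i := (nth 0 (enum_fset A) i).

Lemma big_enum_fset (F : pt -> R) : \sum_(y <- A) F y = \sum_(i < n) F (a_ i).
Proof. by rewrite (big_nth 0) big_mkord. Qed.

Lemma zeta_mxE i j : zeta_mx t A i j = sim (a_ i) (a_ j).
Proof. by rewrite mxE. Qed.

Lemma unitmx_zeta : sim_nondegenerate A -> zeta_mx t A \in unitmx.
Proof.
move=> nondeg; rewrite unitmxE unitfE; apply/negP => /det0P [v /eqP vn0 vZ]; apply: vn0.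
pose V y := \sum_(i < n) (a_ i == y)%:R * v 0 i.
have VE (j : 'I_n) : V (a_ j) = v 0 j.
  rewrite /V (bigD1 j) //= eqxx mul1r big1 ?addr0 // => i ij.
  by rewrite nth_uniq ?fset_uniq // (inj_eq val_inj) (negbTE ij) mul0r.
apply/rowP => j; rewrite mxE -VE; apply: nondeg; last exact: mem_nth.
move=> _ /(nthP 0) [i ilt <-]; rewrite big_enum_fset.
transitivity ((v *m zeta_mx t A) 0 (Ordinal ilt)); last by rewrite vZ mxE.
by rewrite mxE; apply: eq_bigr => k _; rewrite VE zeta_mxE mulrC simC.
Qed.

Lemma Mag_weighting w : sim_nondegenerate A -> weighting A w ->
  Mag t A = \sum_(y <- A) w y.
Proof.
move=> /unitmx_zeta Zu wA.
pose W := \col_(i < n) w (a_ i).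
have ZW : zeta_mx t A *m W = const_mx 1 :> 'cV_n.
  apply/colP => i; rewrite !mxE -(wA (a_ i)) ?mem_nth // big_enum_fset.
  by apply: eq_bigr => k _; rewrite zeta_mxE mxE.
have -> : \sum_(y <- A) w y = \sum_(i < n) (invmx (zeta_mx t A) *m (const_mx 1 : 'cV_n)) i 0.
  by rewrite -ZW mulKmx // big_enum_fset; apply: eq_bigr => i _; rewrite mxE.
by apply: eq_bigr => i _; rewrite mxE; apply: eq_bigr => j _; rewrite mxE mulr1.
Qed.

End Enumeration.

Lemma Mag_weighting_seq (A : {fset pt}) (s : seq pt) w : uniq s -> A =i s ->
  sim_nondegenerate s -> weighting s w -> Mag t A = \sum_(y <- s) w y.
Proof.
move=> us As nondeg ws.
have As' : perm_eq A s by apply: uniq_perm; rewrite ?fset_uniq.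
rewrite (Mag_weighting (w := w)) ?(perm_big _ As') // => [v hv y yA|x xA].
  apply: (nondeg v) => [x xs|]; last by rewrite -(perm_mem As').
  by rewrite -(perm_big _ As'); apply: hv; rewrite (perm_mem As').
by rewrite (perm_big _ As'); apply: ws; rewrite -(perm_mem As').
Qed.

Lemma sim_lt1_neq (x y : pt) : sim x y < 1 -> x != y.
Proof. by apply: contraTneq => ->; rewrite sim_refl ltxx. Qed.

Lemma sim_inv_natr_neq (x y : pt) (k : nat) : sim x y = 1 / k.+2%:R ->
  (x == y) = false /\ (y == x) = false.
Proof.
move=> sxy; have /sim_lt1_neq/negbTE xy : sim x y < 1.
  by rewrite sxy ltr_pdivrMr // mul1r ltr1n.
by split=> //; rewrite eq_sym.
Qed.

Lemma Mag_pair (x y : pt) : sim x y < 1 -> Mag t [fset x; y]%fset = 2 / (1 + sim x y).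
Proof.
move=> lt1; have xy := sim_lt1_neq lt1.
set q := sim x y in lt1 *; have q0 : 0 < q := sim_gt0 x y.
rewrite (@Mag_weighting_seq _ [:: x; y] (fun=> 1 / (1 + q))).
- by rewrite !big_cons big_nil addr0; field; lra.
- by rewrite /= inE xy.
- by move=> u; rewrite !inE.
- move=> v hv u.
  have e1 := hv x (mem_head x _); have e2 := hv y (mem_last x [:: y]).
  rewrite !big_cons !big_nil !addr0 !sim_refl (simC y x) -/q !mul1r in e1 e2.
  have q2 : 1 - q ^+ 2 != 0.
    by rewrite subr_eq0 eq_sym sqrf_eq1 negb_or; apply/andP; split; apply/eqP; lra.
  have vx : v x * (1 - q ^+ 2) = (v x + q * v y) - q * (q * v x + v y) by ring.
  have vy : v y * (1 - q ^+ 2) = (q * v x + v y) - q * (v x + q * v y) by ring.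
  rewrite e1 e2 mulr0 subr0 in vx vy.
  by rewrite !inE => /orP[] /eqP->; apply: (mulIf q2); rewrite mul0r.
- move=> u; rewrite !inE => /orP[] /eqP->;
    rewrite !big_cons !big_nil addr0 sim_refl ?(simC y x) -/q; field; lra.
Qed.

End Similarity.

Arguments simC {R D t} x y.
Arguments sim_refl {R D t} x.
Arguments sim_gt0 {R D t} x y.

Lemma Mag_triangle_345 (R : realType) (D : nat) (t : R) (x y z : 'rV[R]_D) :
  sim t x y = 1 / 16 -> sim t x z = 1 / 32 -> sim t y z = 1 / 8 ->
  Mag t [fset x; y; z]%fset = 1754 / 669.
Proof.
move=> sxy sxz syz.
have [syx szx szy] : [/\ sim t y x = 1 / 16, sim t z x = 1 / 32 & sim t z y = 1 / 8].
  by split; rewrite simC.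
have [nxy nyx] := sim_inv_natr_neq sxy; have [nxz nzx] := sim_inv_natr_neq sxz.
have [nyz nzy] := sim_inv_natr_neq syz.
have [w [wx wy wz]] : exists w : 'rV[R]_D -> R,
    [/\ w x = 616 / 669, w y = 186 / 223 & w z = 580 / 669].
  exists (fun u => if u == x then 616 / 669 else if u == y then 186 / 223 else 580 / 669).
  by rewrite eqxx nyx nzx nzy eqxx.
rewrite (@Mag_weighting_seq _ _ t _ [:: x; y; z] w).
- by rewrite !big_cons big_nil wx wy wz; field.
- by rewrite /= !inE nxy nxz nyz.
- by move=> u; rewrite !inE !orbA.
- move=> v hv u; have := hv x; have := hv y; have := hv z.
  rewrite !inE !eqxx !orbT /= !big_cons !big_nil !addr0 !sim_refl sxy sxz syz syx szx szy.
  move=> /(_ isT) e3 /(_ isT) e2 /(_ isT) e1 /or3P[] /eqP ->; clear -e1 e2 e3; lra.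
- move=> u; rewrite !inE => /or3P[] /eqP ->;
    by rewrite !big_cons big_nil !sim_refl ?sxy ?sxz ?syz ?syx ?szx ?szy wx wy wz; field.
Qed.

Lemma Mag_double_triangle_345 (R : realType) (D : nat) (t : R) (a b c d : 'rV[R]_D) :
  sim t a b = 1 / 16 -> sim t a c = 1 / 256 -> sim t a d = 1 / 32 ->
  sim t b c = 1 / 16 -> sim t b d = 1 / 8 -> sim t c d = 1 / 32 ->
  Mag t [fset a; b; c; d]%fset = 18544 / 5349.
Proof.
move=> sab sac sad sbc sbd scd.
have [sba sca sda] : [/\ sim t b a = 1 / 16, sim t c a = 1 / 256 & sim t d a = 1 / 32].
  by split; rewrite simC.
have [scb sdb sdc] : [/\ sim t c b = 1 / 16, sim t d b = 1 / 8 & sim t d c = 1 / 32].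
  by split; rewrite simC.
have [nab nba] := sim_inv_natr_neq sab; have [nac nca] := sim_inv_natr_neq sac.
have [nad nda] := sim_inv_natr_neq sad; have [nbc ncb] := sim_inv_natr_neq sbc.
have [nbd ndb] := sim_inv_natr_neq sbd; have [ncd ndc] := sim_inv_natr_neq scd.
have [w [wa wb wc wd]] : exists w : 'rV[R]_D -> R,
    [/\ w a = 4928 / 5349, w b = 4168 / 5349, w c = 4928 / 5349 & w d = 4520 / 5349].
  exists (fun u => if u == a then 4928 / 5349 else if u == b then 4168 / 5349
    else if u == c then 4928 / 5349 else 4520 / 5349).
  by rewrite eqxx nba nca nda ncb ndb ndc !eqxx.
rewrite (@Mag_weighting_seq _ _ t _ [:: a; b; c; d] w).
- by rewrite !big_cons big_nil wa wb wc wd; field.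
- by rewrite /= !inE nab nac nad nbc nbd ncd.
- by move=> u; rewrite !inE !orbA.
- move=> v hv u; have := hv a; have := hv b; have := hv c; have := hv d.
  rewrite !inE !eqxx !orbT /= !big_cons !big_nil !addr0 !sim_refl
    sab sac sad sbc sbd scd sba sca sda scb sdb sdc.
  move=> /(_ isT) e4 /(_ isT) e3 /(_ isT) e2 /(_ isT) e1 /or4P[] /eqP ->;
    clear -e1 e2 e3 e4; lra.
- move=> u; rewrite !inE => /or4P[] /eqP ->;
    by rewrite !big_cons big_nil !sim_refl ?sab ?sac ?sad ?sbc ?sbd ?scd
      ?sba ?sca ?sda ?scb ?sdb ?sdc wa wb wc wd; field.
Qed.

Section Counterexample.
Variables (R : realType) (n : nat) (t : R).
Hypothesis t_gt0 : 0 < t.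
Local Notation pt := 'rV[R]_n.+2.
Local Notation sim := (@sim R n.+2 t).

(* The point (a, b) of the plane in the unit ln 2 / t, so that points at distance m have
   similarity 2 ^- m. *)
Definition plane_pt (a b : R) : pt :=
  \row_(i < n.+2) ((if i == 0 :> nat then a else if i == 1 :> nat then b else 0) * (ln 2 / t)).

Lemma sim_plane_pt a b c d (m : nat) : (a - c) ^+ 2 + (b - d) ^+ 2 = m%:R ^+ 2 ->
  sim (plane_pt a b) (plane_pt c d) = 1 / (2 ^ m)%:R.
Proof.
move=> h; rewrite /sim /Defs.edist !big_ord_recl big1 => [|i _]; last first.
  by rewrite !mxE /= mul0r subrr expr0n.
rewrite !mxE /= addr0.
have -> : (a * (ln 2 / t) - c * (ln 2 / t)) ^+ 2 + (b * (ln 2 / t) - d * (ln 2 / t)) ^+ 2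
    = (m%:R * (ln 2 / t)) ^+ 2 by rewrite exprMn -h; ring.
rewrite sqrtr_sqr ger0_norm; last by rewrite mulr_ge0 ?divr_ge0 ?ln_ge0 ?ler1n // ltW.
have -> : t * (m%:R * (ln 2 / t)) = m%:R * ln 2 by field; rewrite gt_eqF.
by rewrite expRN expRM_natl lnK ?posrE // div1r natrX.
Qed.

Lemma Mag_not_submodular :
  exists A B : {fset pt}, Mag t A + Mag t B < Mag t (A `|` B) + Mag t (A `&` B).
Proof.
have gap : 1754 / 669 + 1754 / 669 < 18544 / 5349 + 16 / 9 :> R by lra.
pose p1 := plane_pt 0 0; pose p2 := plane_pt 0 4; pose p3 := plane_pt 0 8; pose p4 := plane_pt 3 4.
have s12 : sim p1 p2 = 1 / 16 by rewrite (@sim_plane_pt _ _ _ _ 4) //; ring.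
have s13 : sim p1 p3 = 1 / 256 by rewrite (@sim_plane_pt _ _ _ _ 8) //; ring.
have s14 : sim p1 p4 = 1 / 32 by rewrite (@sim_plane_pt _ _ _ _ 5) //; ring.
have s23 : sim p2 p3 = 1 / 16 by rewrite (@sim_plane_pt _ _ _ _ 4) //; ring.
have s24 : sim p2 p4 = 1 / 8 by rewrite (@sim_plane_pt _ _ _ _ 3) //; ring.
have s34 : sim p3 p4 = 1 / 32 by rewrite (@sim_plane_pt _ _ _ _ 5) //; ring.
exists [fset p1; p2; p4], [fset p3; p2; p4].
have -> : [fset p1; p2; p4] `|` [fset p3; p2; p4] = [fset p1; p2; p3; p4].
  apply/fsetP => u; rewrite !inE.
  by case: (u == p1); case: (u == p2); case: (u == p3); case: (u == p4).
have -> : [fset p1; p2; p4] `&` [fset p3; p2; p4] = [fset p2; p4].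
  apply/fsetP => u; rewrite !inE; case E: (u == p1) => /=.
    move/eqP: E => ->.
    by rewrite (sim_inv_natr_neq s12).1 (sim_inv_natr_neq s13).1 (sim_inv_natr_neq s14).1.
  by case: (u == p2); case: (u == p4); rewrite /= ?orbT ?andbF.
have s32 : sim p3 p2 = 1 / 16 by rewrite simC.
rewrite (Mag_triangle_345 s12 s14 s24) (Mag_triangle_345 s32 s34 s24).
have s24_lt1 : sim p2 p4 < 1 by rewrite s24 ltr_pdivrMr // mul1r ltr1n.
rewrite (Mag_double_triangle_345 s12 s13 s14 s23 s24 s34) (Mag_pair s24_lt1) s24.
by rewrite (_ : 2 / (1 + 1 / 8) = 16 / 9) //; field.
Qed.

End Counterexample.

Section GapGain.
Variable R : realFieldType.
Implicit Types a b q : R.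

(* For q = exp (- t d), tanh_half q = tanh (t d / 2): the contribution of a gap of
   length d to the magnitude of a finite subset of the line. *)
Definition tanh_half q := (1 - q) / (1 + q).

Definition mag_gain a b := tanh_half a + tanh_half b - tanh_half (a * b).

(* Inserting a point between neighbours with similarities a and b, its weight is
   weight_new a b and the weight of its left (right) neighbour changes by
   a * weight_shift a b (b * weight_shift b a); these solve the weighting equations at the
   new point and on either side of it. *)
Definition weight_new a b := (1 - a * b) / ((1 + a) * (1 + b)).

Definition weight_shift a b := - (1 - b) / ((1 + a) * (1 + a * b)).

Lemma insertion_weights a b : 0 <= a -> 0 <= b -> [/\
  weight_shift a b + b ^+ 2 * weight_shift b a + weight_new a b = 0,
  a ^+ 2 * weight_shift a b + weight_shift b a + weight_new a b = 0,
  (a + b) / (1 + a * b) + a ^+ 2 * weight_shift a b + b ^+ 2 * weight_shift b a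
    + weight_new a b = 1 &
  a * weight_shift a b + b * weight_shift b a + weight_new a b = mag_gain a b].
Proof.
move=> a0 b0; have ab0 := mulr_ge0 a0 b0.
have [na nb nab] : [/\ 1 + a != 0, 1 + b != 0 & 1 + a * b != 0].
  by split; rewrite lt0r_neq0 //; lra.
have nba : 1 + b * a != 0 by rewrite mulrC.
rewrite /weight_shift /weight_new /mag_gain /tanh_half.
by split; field; rewrite ?na ?nb ?nab ?nba.
Qed.

Lemma mag_gainC a b : mag_gain a b = mag_gain b a.
Proof. by rewrite /mag_gain (addrC (tanh_half a)) (mulrC a). Qed.

Lemma mag_gain_le a a' b : 0 <= a -> a <= a' -> a' <= 1 -> 0 <= b -> b <= 1 ->
  mag_gain a' b <= mag_gain a b.
Proof.
move=> a0 aa' a'1 b0 b1; have a'0 := le_trans a0 aa'.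
have ab0 := mulr_ge0 a0 b0; have a'b0 := mulr_ge0 a'0 b0.
have -> : mag_gain a' b = mag_gain a b - 2 * (a' - a) * (1 - b) * (1 - a * a' * b) /
    ((1 + a) * (1 + a') * (1 + a * b) * (1 + a' * b)).
  have [na na' nb] : [/\ 1 + a != 0, 1 + a' != 0 & 1 + b != 0].
    by split; rewrite lt0r_neq0 //; lra.
  have [nab na'b] : 1 + a * b != 0 /\ 1 + a' * b != 0 by split; rewrite lt0r_neq0 //; lra.
  by rewrite /mag_gain /tanh_half; field; rewrite na na' nb nab na'b.
rewrite lerBlDr lerDl divr_ge0 ?mulr_ge0 //; try lra.
suff : a * a' * b <= 1 by lra.
have a1 := le_trans aa' a'1.
by apply: mulr_ile1; rewrite ?mulr_ge0 ?mulr_ile1.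
Qed.

Lemma mag_gain_ge0 a b : 0 <= a -> a <= 1 -> 0 <= b -> b <= 1 -> 0 <= mag_gain a b.
Proof.
move=> a0 a1 b0 b1.
have <- : mag_gain 1 1 = 0 by rewrite /mag_gain mulr1 addrK /tanh_half subrr mul0r.
apply: le_trans (mag_gain_le b0 b1 _ _ _) _; rewrite ?ler01 //.
by rewrite mag_gainC mag_gain_le.
Qed.

End GapGain.

Section DiminishingReturns.
Variables (R : realDomainType) (K : choiceType) (F : {fset K} -> R).

Hypothesis F_diminishing : forall (S T : {fset K}) p, S `<=` T -> p \notin T ->
  F (p |` T) - F T <= F (p |` S) - F S.

Lemma diminishing_fsetU (C A S : {fset K}) : [disjoint C & A] -> S `<=` A ->
  F (A `|` C) - F A <= F (S `|` C) - F S.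
Proof.
move: A S; elim/fset1U_rect: C => [|p C pC IH] A S; first by rewrite !fsetU0 !subrr.
rewrite fdisjointU1X => /andP[pA CA] SA; rewrite (fsetUCA A) (fsetUCA S).
have pAC : p \notin A `|` C by rewrite inE negb_or pA.
have := F_diminishing (fsetUSS SA (fsubset_refl C)) pAC.
have := IH _ _ CA SA; lra.
Qed.

Lemma submodular (A B : {fset K}) : F (A `|` B) + F (A `&` B) <= F A + F B.
Proof.
have := @diminishing_fsetU (B `\` A) A (A `&` B).
have -> : A `|` (B `\` A) = A `|` B by apply/fsetP => x; rewrite !inE; case: (x \in A).
have -> : A `&` B `|` (B `\` A) = B.
  by apply/fsetP => x; rewrite !inE; case: (x \in A); case: (x \in B).
have BA : [disjoint B `\` A & A] by apply/fdisjointP => x; rewrite inE => /andP[].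
move=> /(_ BA (fsubsetIl A B)); lra.
Qed.

Hypothesis F_mono1 : forall (A : {fset K}) p, p \notin A -> F A <= F (p |` A).

Lemma le_fsetUr (A C : {fset K}) : F A <= F (A `|` C).
Proof.
elim/fset1U_rect: C => [|p C _ IH]; first by rewrite fsetU0.
rewrite fsetUCA; have [pAC|pAC] := boolP (p \in A `|` C); first by rewrite mem_fset1U.
exact: le_trans IH (F_mono1 pAC).
Qed.

Lemma le_fsubset (S T : {fset K}) : S `<=` T -> F S <= F T.
Proof. by move=> /fsetUidPr <-; exact: le_fsetUr. Qed.

Lemma union_triangle (X Y Z : {fset K}) :
  F (X `|` Z) + F Y <= F (X `|` Y) + F (Y `|` Z).
Proof.
have := submodular (X `|` Y) (Y `|` Z).
have := le_fsubset (fsetUSS (fsubsetUl X Y) (fsubsetUr Y Z)).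
have : Y `<=` (X `|` Y) `&` (Y `|` Z) by rewrite fsubsetI fsubsetUr fsubsetUl.
move=> /le_fsubset; lra.
Qed.

End DiminishingReturns.

Section Line.
Variables (R : realType) (t : R).
Hypothesis t_gt0 : 0 < t.
Local Notation pt := 'rV[R]_1.
Local Notation sim := (@sim R 1 t).
Local Notation weighting := (@weighting R 1 t).

Definition coord (x : pt) : R := x 0 0.

Lemma coord_inj : injective coord.
Proof. by move=> x y e; apply/rowP => i; rewrite ord1. Qed.

Lemma sim_coord x y : sim x y = expR (- (t * `|coord x - coord y|)).
Proof. by rewrite /sim /Defs.edist big_ord1 sqrtr_sqr. Qed.

Lemma sim_lt1 x y : x != y -> sim x y < 1.
Proof.
move=> xy; rewrite sim_coord expR_lt1 oppr_lt0 mulr_gt0 // normr_gt0 subr_eq0.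
by apply: contra xy => /eqP /coord_inj ->.
Qed.

Lemma sim_mul (e : R) x y z : e != 0 ->
  e * coord x <= e * coord y -> e * coord y <= e * coord z ->
  sim x z = sim x y * sim y z.
Proof.
move=> e0 xy yz; rewrite !sim_coord -expRD -opprD -mulrDr.
congr (expR (- (t * _))); apply: (@mulfI _ `|e|); first by rewrite normr_eq0.
rewrite mulrDr -!normrM !mulrBr !ler0_norm ?subr_le0 //; last exact: le_trans yz.
ring.
Qed.

(* The similarity of p to its nearest neighbour in A on the left (e = 1) or on the right
   (e = -1); it is 0 when A has no point on that side. *)
Definition nearest_sim (e : R) (A : {fset pt}) (p : pt) : R :=
  \big[Num.max/0]_(y <- A | e * coord y < e * coord p) sim y p.

Lemma nearest_sim_ge0 e A p : 0 <= nearest_sim e A p.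
Proof. exact: bigmax_ge_id. Qed.

Lemma nearest_sim_lt1 e A p : p \notin A -> nearest_sim e A p < 1.
Proof.
move=> pA; rewrite /nearest_sim big_seq_cond; apply: bigmax_lt => // y /andP[yA _].
by apply: sim_lt1; apply: contraNneq pA => <-.
Qed.

Lemma nearest_sim_le1 e A p : p \notin A -> nearest_sim e A p <= 1.
Proof. by move=> pA; rewrite ltW // nearest_sim_lt1. Qed.

Lemma nearest_sim_fsubset e S T p : S `<=` T -> nearest_sim e S p <= nearest_sim e T p.
Proof. by move=> /fsubsetP; exact: sub_bigmax_seq. Qed.

(* Multiplying by the nearest similarity makes these identities hold trivially when p
   has no neighbour on that side, which spares case splits later. *)
Lemma exists_nearest e A p : e != 0 -> exists l, [/\
  nearest_sim e A p != 0 -> l \in A,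
  {in A, forall x, e * coord x < e * coord p -> nearest_sim e A p * sim x l = sim x p} &
  forall x, e * coord p <= e * coord x ->
    nearest_sim e A p * sim x l = nearest_sim e A p ^+ 2 * sim x p].
Proof.
move=> e0; have [[y yA yp]|none] := pselect (exists2 y, y \in A & e * coord y < e * coord p).
  have [l [lA lp lnear]] := @exists_fset_argmax _ _ _ A
    (fun y => e * coord y < e * coord p) (fun y => e * coord y) (ex_intro2 _ _ y yA yp).
  have sim_below x : x \in A -> e * coord x < e * coord p -> sim x p = sim x l * sim l p.
    by move=> xA xp; apply: (sim_mul e0); [exact: lnear | exact: ltW].
  have -> : nearest_sim e A p = sim l p.
    apply/le_anti/andP; split; last exact: (le_bigmax_seq _ _ _ _ lA lp).
    rewrite /nearest_sim big_seq_cond; apply: bigmax_le; first exact: ltW (sim_gt0 _ _).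
    move=> x /andP[xA xp]; rewrite sim_below //.
    by rewrite ler_piMl ?sim_le1 ?(ltW t_gt0) // ltW // sim_gt0.
  exists l; split=> // [x xA xp | x px]; first by rewrite mulrC -sim_below.
  by rewrite expr2 -mulrA [sim x l]simC (sim_mul e0 (ltW lp) px) (simC p x).
have -> : nearest_sim e A p = 0.
  apply/le_anti/andP; split; last exact: nearest_sim_ge0.
  rewrite /nearest_sim big_seq_cond; apply: bigmax_le => // x /andP[xA xp].
  by case: none; exists x.
exists p; split=> [|x xA xp|x _]; [by rewrite eqxx | by case: none; exists x |].
by rewrite expr2 !mul0r.
Qed.

Section Insertion.
Variables (A : {fset pt}) (p l r : pt).
Hypothesis pA : p \notin A.
Local Notation a := (nearest_sim 1 A p).
Local Notation b := (nearest_sim (-1) A p).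
Hypothesis lA : a != 0 -> l \in A.
Hypothesis l_below : {in A, forall x, 1 * coord x < 1 * coord p -> a * sim x l = sim x p}.
Hypothesis l_above : forall x, 1 * coord p <= 1 * coord x -> a * sim x l = a ^+ 2 * sim x p.
Hypothesis rA : b != 0 -> r \in A.
Hypothesis r_above : {in A, forall x, -1 * coord x < -1 * coord p -> b * sim x r = sim x p}.
Hypothesis r_below : forall x, -1 * coord p <= -1 * coord x -> b * sim x r = b ^+ 2 * sim x p.

Lemma sim_lower_nbr x : x \in A ->
  a * sim x l = (if coord x < coord p then 1 else a ^+ 2) * sim x p.
Proof.
move=> xA; case: ifPn => xp; first by rewrite mul1r l_below ?mul1r.
by rewrite l_above // !mul1r leNgt.
Qed.

Lemma sim_upper_nbr x : x \in A ->
  b * sim x r = (if coord x < coord p then b ^+ 2 else 1) * sim x p.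
Proof.
move=> xA; case: ifPn => xp; first by rewrite r_below // !mulN1r lerN2 ltW.
rewrite mul1r r_above // !mulN1r ltrN2 lt_neqAle leNgt xp andbT.
by apply: contraNneq pA => /coord_inj ->.
Qed.

Lemma scale_weighting c z w : (c != 0 -> z \in A) -> weighting A w ->
  c * \sum_(y <- A) sim z y * w y = c.
Proof.
move=> zA wA; have [->|c0] := eqVneq c 0; first by rewrite mul0r.
by rewrite wA ?mulr1 ?zA.
Qed.

Lemma sum_sim_new w : weighting A w ->
  \sum_(y <- A) sim p y * w y = (a + b) / (1 + a * b).
Proof.
move=> wA; set L := \sum_(y <- A | coord y < coord p) sim y p * w y.
set U := \sum_(y <- A | ~~ (coord y < coord p)) sim y p * w y.
have split_sum f g (F : pt -> R) :
    {in A, forall y, F y = (if coord y < coord p then f else g) * sim y p * w y} ->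
    \sum_(y <- A) F y = f * L + g * U.
  move=> FE; rewrite (eq_big_seq _ FE) (bigID (fun y => coord y < coord p)) /L /U.
  rewrite !big_distrr /=.
  by congr (_ + _); apply: eq_bigr => y yp; rewrite ?yp ?(negbTE yp) mulrA.
(* The weighting equations at the two neighbours, scaled by a and b. *)
have eqa : a = 1 * L + a ^+ 2 * U.
  rewrite -[LHS](scale_weighting lA wA) big_distrr /=; apply: split_sum => y yA.
  by rewrite mulrA (simC l) sim_lower_nbr.
have eqb : b = b ^+ 2 * L + 1 * U.
  rewrite -[LHS](scale_weighting rA wA) big_distrr /=; apply: split_sum => y yA.
  by rewrite mulrA (simC r) sim_upper_nbr.
have -> : \sum_(y <- A) sim p y * w y = 1 * L + 1 * U.
  by apply: split_sum => y _; rewrite if_same mul1r simC.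
have [a0 b0] := (nearest_sim_ge0 1 A p, nearest_sim_ge0 (-1) A p).
have [a1 b1] := (nearest_sim_lt1 1 pA, nearest_sim_lt1 (-1) pA).
have ab1 : a * b < 1 by rewrite mulr_ilt1.
have nab : 1 + a * b != 0 by rewrite lt0r_neq0 // ltr_wpDr // mulr_ge0.
have nab' : 1 - a * b != 0 by rewrite subr_eq0 eq_sym lt_eqF.
have hL : (L * (1 + a * b) - a) * (1 - a * b) =
    (1 * L + a ^+ 2 * U - a) - a ^+ 2 * (b ^+ 2 * L + 1 * U - b) by ring.
have hU : (U * (1 + a * b) - b) * (1 - a * b) =
    (b ^+ 2 * L + 1 * U - b) - b ^+ 2 * (1 * L + a ^+ 2 * U - a) by ring.
rewrite -eqa -eqb !subrr !mulr0 !subrr in hL hU.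
have solve X c : (X * (1 + a * b) - c) * (1 - a * b) = 0 -> X = c / (1 + a * b).
  by move/eqP; rewrite mulf_eq0 (negbTE nab') orbF subr_eq0 => /eqP <-; field.
by rewrite (solve _ _ hL) (solve _ _ hU); field.
Qed.

Lemma weighting_fsetU1_nbrs w : weighting A w ->
  exists2 w', weighting (p |` A) w' &
    \sum_(y <- p |` A) w' y = \sum_(y <- A) w y + mag_gain a b.
Proof.
move=> wA; have [E1 E2 E3 E4] :=
  insertion_weights (nearest_sim_ge0 1 A p) (nearest_sim_ge0 (-1) A p).
set u := weight_shift a b in E1 E2 E3 E4; set v := weight_shift b a in E1 E2 E3 E4.
set c := weight_new a b in E1 E2 E3 E4.
pose w' y := if y == p then c else w y + a * u * (y == l)%:R + b * v * (y == r)%:R.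
have mem_scale (q : R) z : (q != 0 -> z \in A) -> q * (z \in A)%:R = q.
  by move=> zA; have [->|q0] := eqVneq q 0; rewrite ?mul0r // zA ?mulr1.
have sumA (F : pt -> R) : \sum_(y <- A) F y * w' y =
    \sum_(y <- A) F y * w y + u * (a * F l) + v * (b * F r).
  rewrite (eq_big_seq (fun y => F y * w y + a * u * (F y * (y == l)%:R)
      + b * v * (F y * (y == r)%:R))) => [|y yA]; last first.
    by rewrite /w' ifF; [ring | apply: contraNF pA => /eqP <-].
  rewrite !big_split /= -!big_distrr /= !big_fset_indicator.
  rewrite -[in RHS](mem_scale _ _ lA) -[in RHS](mem_scale _ _ rA); ring.
have sum1 (f : pt -> R) : \sum_(y <- A) f y = \sum_(y <- A) 1 * f y.
  by apply: eq_bigr => y _; rewrite mul1r.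
exists w' => [x|]; last first.
  by rewrite big_fsetU1 //= (sum1 w') (sum1 w) sumA /w' eqxx !mulr1 -E4; ring.
rewrite !inE => /orP[/eqP -> | xA]; rewrite big_fsetU1 //= sumA /w' eqxx.
  rewrite sim_refl (sum_sim_new wA) l_above ?r_below // sim_refl !mulr1.
  by rewrite -[RHS]E3; ring.
rewrite wA // sim_lower_nbr // sim_upper_nbr //.
case: ifP => _; rewrite -[RHS]addr0 -(mulr0 (sim x p)).
  by rewrite -E1; ring.
by rewrite -E2; ring.
Qed.

End Insertion.

Lemma weighting_fsetU1 (A : {fset pt}) p w : p \notin A -> weighting A w ->
  exists2 w', weighting (p |` A) w' &
    \sum_(y <- p |` A) w' y =
    \sum_(y <- A) w y + mag_gain (nearest_sim 1 A p) (nearest_sim (-1) A p).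
Proof.
move=> pA; have [l [lA l_below l_above]] := exists_nearest A p (oner_neq0 R).
have [|r [rA r_above r_below]] := exists_nearest A p (e := -1).
  by rewrite oppr_eq0 oner_eq0.
by move=> wA; apply: (weighting_fsetU1_nbrs pA lA l_below l_above rA r_above r_below wA).
Qed.

Lemma exists_weighting_line (A : {fset pt}) : exists w, weighting A w.
Proof.
elim/fset1U_rect: A => [|p A pA [w /(weighting_fsetU1 pA) [w' w'A _]]]; last by exists w'.
by exists (fun=> 0) => x; rewrite inE.
Qed.

(* Remove the rightmost point m: the equation at its left neighbour, scaled by q, differs
   from the equation at m only in the coefficient q ^+ 2 of v m, so v m = 0. *)
Lemma sim_nondegenerate_line (A : {fset pt}) : sim_nondegenerate t A.
Proof.
move: {2}#|` A| (erefl #|` A|) => n; elim: n A => [|n IH] A cardA v hv y yA.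
  by move: yA; rewrite (cardfs0_eq cardA) inE.
have [m [mA _ mmax]] := @exists_fset_argmax _ _ _ A predT coord (ex_intro2 _ _ y yA isT).
set A' := A `\ m.
have cardA' : #|` A'| = n by move: cardA; rewrite (cardfsD1 m) mA add1n => -[].
have mA' : m \notin A' by rewrite in_fsetD1 eqxx.
have A'A x : x \in A' -> x \in A by rewrite in_fsetD1 => /andP[].
have sumA x : \sum_(y <- A) sim x y * v y = sim x m * v m + \sum_(y <- A') sim x y * v y.
  by rewrite (big_fsetD1 m).
have [l [lA' l_below l_above]] := exists_nearest A' m (oner_neq0 R).
set q := nearest_sim 1 A' m in lA' l_below l_above.
have eq_m : v m + \sum_(y <- A') sim m y * v y = 0.
  by have := hv m mA; rewrite sumA sim_refl mul1r.
have eq_l : q ^+ 2 * v m + \sum_(y <- A') sim m y * v y = 0.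
  have -> : q ^+ 2 * v m + \sum_(y <- A') sim m y * v y = q * \sum_(y <- A) sim l y * v y.
    rewrite sumA mulrDr mulrA (simC l) l_above ?sim_refl ?mulr1 // big_distrr /=.
    congr (_ + _); apply: eq_big_seq => x xA'.
    rewrite mulrA (simC l) l_below ?(simC x) // !mul1r lt_neqAle mmax ?A'A // andbT.
    by apply: contraNneq mA' => /coord_inj <-.
  by have [->|/lA' /A'A lA] := eqVneq q 0; rewrite ?mul0r // hv ?mulr0.
have vm : v m = 0.
  have q2 : 1 - q ^+ 2 != 0.
    have q0 : 0 <= q := nearest_sim_ge0 1 A' m; have q1 : q < 1 := nearest_sim_lt1 1 mA'.
    by rewrite subr_eq0 eq_sym sqrf_eq1 negb_or; apply/andP; split; apply/eqP; lra.
  by apply: (mulIf q2); rewrite mulrBr mulr1 mul0r; lra.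
have [->|ym] := eqVneq y m; first exact: vm.
apply: (IH A' cardA' v) => [x xA'|]; last by rewrite in_fsetD1 ym.
by have := hv x (A'A x xA'); rewrite sumA vm mulr0 add0r.
Qed.

Lemma Mag_fsetU1 (A : {fset pt}) p : p \notin A ->
  Mag t (p |` A) = Mag t A + mag_gain (nearest_sim 1 A p) (nearest_sim (-1) A p).
Proof.
move=> pA; have [w wA] := exists_weighting_line A.
rewrite (Mag_weighting (@sim_nondegenerate_line A) wA).
have [w' w'A <-] := weighting_fsetU1 pA wA.
exact: Mag_weighting (@sim_nondegenerate_line (p |` A)) w'A.
Qed.

Lemma Mag_line_diminishing (S T : {fset pt}) p : S `<=` T -> p \notin T ->
  Mag t (p |` T) - Mag t T <= Mag t (p |` S) - Mag t S.
Proof.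
move=> ST pT; have pS : p \notin S by apply: contra pT; apply: (fsubsetP ST).
rewrite !Mag_fsetU1 // !(addrC (Mag t _)) !addrK.
have [lS lT] := (nearest_sim_fsubset 1 p ST, nearest_sim_fsubset (-1) p ST).
apply: le_trans (mag_gain_le _ lS _ _ _) _; rewrite ?nearest_sim_ge0 ?nearest_sim_le1 //.
by rewrite mag_gainC [X in _ <= X]mag_gainC mag_gain_le ?nearest_sim_ge0 ?nearest_sim_le1.
Qed.

Lemma Mag_line_fsetU1 (A : {fset pt}) p : p \notin A -> Mag t A <= Mag t (p |` A).
Proof.
by move=> pA; rewrite Mag_fsetU1 // lerDl mag_gain_ge0 ?nearest_sim_ge0 ?nearest_sim_le1.
Qed.

Lemma dMag_triangle_line (X Y Z : {fset pt}) : dMag t X Z <= dMag t X Y + dMag t Y Z.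
Proof.
have := union_triangle Mag_line_diminishing Mag_line_fsetU1 X Y Z.
rewrite /dMag; lra.
Qed.

End Line.

Lemma dMag_triangle_defect (R : realType) (D : nat) (t : R) (A B : {fset 'rV[R]_D}) :
  dMag t A (A `&` B) + dMag t (A `&` B) B - dMag t A B =
  2 * (Mag t A + Mag t B - Mag t (A `|` B) - Mag t (A `&` B)).
Proof.
rewrite /dMag (fsetUidPl _ _ (fsubsetIl A B)) (fsetUidPr _ _ (fsubsetIr A B)).
by ring.
Qed.

Theorem lemmaB6 (R : realType) (t : R) (D : nat) (ht : 0 < t) (hD : (1 <= D)%N) :
  ((forall X Y Z : {fset 'rV[R]_D}, dMag t X Z <= dMag t X Y + dMag t Y Z) <->
   (forall A B : {fset 'rV[R]_D},
      Mag t (A `|` B)%fset + Mag t (A `&` B)%fset <= Mag t A + Mag t B))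
  /\
  (exists (D' : nat) (t' : R) (X Y Z : {fset 'rV[R]_D'}),
      (1 <= D')%N /\ 0 < t' /\ dMag t' X Y + dMag t' Y Z < dMag t' X Z).
Proof.
split; first split.
- move=> triangle A B; have := triangle A (A `&` B) B.
  have := dMag_triangle_defect t A B; lra.
- case: D hD => [//|[_ _|n _ submod]]; first exact: dMag_triangle_line.
  have [A [B AB]] := Mag_not_submodular n ht; have := submod A B; lra.
- have [A [B AB]] := Mag_not_submodular 0 (@ltr01 R).
  exists 2%N, 1, A, (A `&` B), B; split=> //; split=> //.
  have := dMag_triangle_defect 1 A B; lra.
Qed.
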